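(* Let $pqr$ be a non-degenerate triangle in $\mathbb{R}^2$ and let $\tau(p),\tau(q),\tau(r)$ be real numbers with $\tau(p)\le\tau(q)\le\tau(r)$. Let $\sigma>0$ and suppose $\|\nabla\tau\|<\sigma$. Let $0<\varepsilon<1$ and $d_p:=\operatorname{dist}(p,\operatorname{aff}(qr))$. For $\delta\ge0$ let $\tau'_\delta$ denote the affine function on $\mathbb{R}^2$ with $\tau'_\delta(p)=\tau(p)+\delta$, $\tau'_\delta(q)=\tau(q)$, $\tau'_\delta(r)=\tau(r)$. (1) If $\angle pqr\le\pi/2$ and $\frac{\tau(r)-\tau(q)}{|qr|}\le(1-\varepsilon)\sigma$, then $\|\nabla\tau'_\delta\|<\sigma$ for every $\delta\in[0,\varepsilon\, d_p\,\sigma]$. (2) If $\pi/2<\angle pqr<\pi$ and $\frac{\tau(r)-\tau(q)}{|qr|}\le(1-\varepsilon)\,\sigma\,\sin\angle pqr$, then $\|\nabla\tau'_\delta\|<\sigma$ for every $\delta\in[0,\varepsilon\, d_p\,\sigma]$.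
   Context: Given real values at the three vertices of a triangle, $\tau$ also denotes the unique affine function $\mathbb{R}^2\to\mathbb{R}$ interpolating them, and $\nabla\tau\in\mathbb{R}^2$ is its (constant) gradient with Euclidean norm $\|\nabla\tau\|$. $\operatorname{aff}(qr)$ is the line through $q$ and $r$, and $|qr|$ the length of segment $qr$. *)

From Stdlib Require Import Reals Lra.
Open Scope R_scope.

Definition pt := (R * R)%type.

Definition dot (u v : pt) : R := fst u * fst v + snd u * snd v.
Definition vsub (u v : pt) : pt := (fst u - fst v, snd u - snd v).
Definition vnorm (u : pt) : R := sqrt (dot u u).
Definition seglen (u v : pt) : R := vnorm (vsub v u).
Definition cross (u v : pt) : R := fst u * snd v - snd u * fst v.

Definition nondegenerate (p q r : pt) : Prop := cross (vsub q p) (vsub r p) <> 0.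

Definition angle (p q r : pt) : R :=
  acos (dot (vsub p q) (vsub r q) / (seglen q p * seglen q r)).

Definition dist_line (x q r : pt) : R :=
  Rabs (cross (vsub r q) (vsub x q)) / seglen q r.

(* The (constant) gradient of the unique affine function R^2 -> R taking
   values a, b, c at p, q, r (Cramer's rule for g.(q-p) = b-a, g.(r-p) = c-a). *)
Definition grad (p q r : pt) (a b c : R) : pt :=
  let D := cross (vsub q p) (vsub r p) in
  (((b - a) * (snd r - snd p) - (c - a) * (snd q - snd p)) / D,
   ((c - a) * (fst q - fst p) - (b - a) * (fst r - fst p)) / D).

Lemma grad_spec (p q r : pt) (a b c : R) :
  nondegenerate p q r ->
  dot (grad p q r a b c) (vsub q p) = b - a /\
  dot (grad p q r a b c) (vsub r p) = c - a.
Proof.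
  unfold nondegenerate, grad, dot, vsub, cross; destruct p, q, r; simpl; intro H.
  split; field; exact H.
Qed.

From Stdlib Require Import Reals Lra Psatz.
Open Scope R_scope.

(* Let w = r - q, v = p - q, L = |qr| and h = dist(p, aff(qr)).  The
   gradient G of the interpolant splits into its component along qr, the
   tangential slope a = (tr - tq) / L, and its component orthogonal to qr,
   the normal slope y; thus |G|^2 = a^2 + y^2 (grad_norm_sq).  Raising tp
   by delta leaves a unchanged and adds delta / h to y (normal_slope_shift),
   and delta <= eps h sigma means delta / h <= eps sigma.  Writing theta for
   the angle pqr, the projection of G on v gives
   y sin theta = (tp - tq) / |qp| - a cos theta <= - a cos theta
   (normal_slope_sin), since tp <= tq.

   The theorem therefore reduces to two facts about points (a, y) of the
   open disc of radius sigma (acute_shift, obtuse_shift): moving upwards by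
   at most eps sigma keeps the point in the disc when y sin theta <= -a cos
   theta and a is at most (1 - eps) sigma (acute case) resp.
   (1 - eps) sigma sin theta (obtuse case). *)

Lemma div_nonneg (x y : R) : 0 <= x -> 0 < y -> 0 <= x / y.
Proof. intros Hx Hy; apply Rmult_le_pos; [exact Hx | apply Rlt_le, Rinv_0_lt_compat, Hy]. Qed.

Lemma shift_toward_axis (a y t sigma : R) :
  a * a + y * y < sigma * sigma -> 0 <= t -> y + t <= 0 ->
  a * a + (y + t) * (y + t) < sigma * sigma.
Proof. intros; nra. Qed.

(* Acute case: the normal slope starts non-positive, so after the shift it is
   at most eps sigma, while the tangential slope is at most (1 - eps) sigma. *)
Lemma acute_shift (a y s c sigma eps t : R) :
  0 < sigma -> 0 < eps < 1 -> 0 <= a <= (1 - eps) * sigma ->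
  0 < s -> 0 <= c -> y * s <= - (a * c) ->
  a * a + y * y < sigma * sigma -> 0 <= t <= eps * sigma ->
  a * a + (y + t) * (y + t) < sigma * sigma.
Proof.
  intros Hs He Ha Hs0 Hc Hy H0 Ht.
  assert (Hy0 : y <= 0) by nra.
  destruct (Rle_or_lt (y + t) 0) as [Hn | Hp].
  - apply shift_toward_axis; lra.
  - assert ((y + t) * (y + t) <= (eps * sigma) * (eps * sigma)) by nra.
    assert (a * a <= ((1 - eps) * sigma) * ((1 - eps) * sigma)) by nra.
    assert (0 < eps * (1 - eps) * (sigma * sigma)).
    { apply Rmult_lt_0_compat; [apply Rmult_lt_0_compat|]; nra. }
    nra.
Qed.

(* Obtuse case (s = sin theta, c = cos theta < 0): with m = (1 - eps) sigma s,
   s^2 (a^2 + (y+t)^2) <= a^2 + 2 a |c| eps sigma s + (eps sigma s)^2, and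
   a |c| < m because |c| < 1; this is < (m + eps sigma s)^2 = (sigma s)^2. *)
Lemma obtuse_shift (a y s c sigma eps t : R) :
  0 < sigma -> 0 < eps < 1 -> 0 <= a <= (1 - eps) * sigma * s ->
  0 < s -> c < 0 -> s * s + c * c = 1 -> y * s <= - (a * c) ->
  a * a + y * y < sigma * sigma -> 0 <= t <= eps * sigma ->
  a * a + (y + t) * (y + t) < sigma * sigma.
Proof.
  intros Hs He Ha Hs0 Hc Hsc Hy H0 Ht.
  destruct (Rle_or_lt (y + t) 0) as [Hn | Hp].
  - apply shift_toward_axis; lra.
  - set (m := (1 - eps) * sigma * s) in *.
    assert (Hc1 : - c < 1).
    { assert (0 < s * s) by (apply Rmult_lt_0_compat; lra).
      assert (c * c < 1) by lra.
      destruct (Rlt_or_le (- c) 1) as [h | h]; [exact h |].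
      assert (1 * 1 <= (- c) * (- c)) by (apply Rmult_le_compat; lra). lra. }
    assert (Hm : 0 < m) by (unfold m; repeat apply Rmult_lt_0_compat; lra).
    assert (Hac : a * (- c) < m).
    { assert (a * (- c) <= m * (- c)) by (apply Rmult_le_compat_r; lra).
      assert (m * (- c) < m * 1) by (apply Rmult_lt_compat_l; lra). lra. }
    assert (Hys : 0 <= (y + t) * s <= a * (- c) + eps * sigma * s) by nra.
    assert (Hsq : (y + t) * s * ((y + t) * s)
                  <= (a * (- c) + eps * sigma * s) * (a * (- c) + eps * sigma * s)) by nra.
    assert (Hmain : a * a * (s * s) + (a * (- c) + eps * sigma * s) * (a * (- c) + eps * sigma * s)
                    < sigma * sigma * (s * s)).
    { assert (a * a <= m * m) by nra.
      assert (a * (- c) * (eps * sigma * s) < m * (eps * sigma * s)).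
      { apply Rmult_lt_compat_r; [|exact Hac]. apply Rmult_lt_0_compat; nra. }
      unfold m in *; nra. }
    nra.
Qed.

Definition tangential_slope (q r : pt) (tq tr : R) : R := (tr - tq) / seglen q r.

(* Slope orthogonal to qr: the deviation of tp from the value predicted at the
   foot of the altitude through p by the tangential slope, divided by the
   height h of p over aff(qr). *)
Definition normal_slope (p q r : pt) (tp tq tr : R) : R :=
  (tp - tq - (tr - tq) * (dot (vsub p q) (vsub r q) / dot (vsub r q) (vsub r q)))
  / dist_line p q r.

Lemma dot_self_nonneg (u : pt) : 0 <= dot u u.
Proof. destruct u; unfold dot; simpl; nra. Qed.

Lemma seglen_sq (u v : pt) : seglen u v * seglen u v = dot (vsub v u) (vsub v u).
Proof. apply sqrt_sqrt, dot_self_nonneg. Qed.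

Lemma vnorm_lt_iff (u : pt) (sigma : R) :
  0 < sigma -> (vnorm u < sigma <-> dot u u < sigma * sigma).
Proof.
  intro Hs.
  assert (Hu := dot_self_nonneg u).
  unfold vnorm; split; intro H.
  - assert (Hsq := sqrt_sqrt (dot u u) Hu).
    assert (0 <= sqrt (dot u u)) by apply sqrt_pos. nra.
  - rewrite <- (sqrt_square sigma) by lra.
    apply sqrt_lt_1_alt; lra.
Qed.

Lemma lagrange_identity (v w : pt) :
  dot v w * dot v w + cross w v * cross w v = dot v v * dot w w.
Proof. destruct v, w; unfold dot, cross; simpl; ring. Qed.

(* Decomposition of g along w and orthogonally to w, with denominators cleared:
   |w|^2 (w x v)^2 |g|^2 = (g.w)^2 (w x v)^2 + (|w|^2 g.v - (g.w)(v.w))^2. *)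
Lemma gram_identity (w v g : pt) :
  dot w w * (cross w v * cross w v) * dot g g =
  dot g w * dot g w * (cross w v * cross w v) +
  (dot w w * dot g v - dot g w * dot v w) * (dot w w * dot g v - dot g w * dot v w).
Proof. destruct w, v, g; unfold dot, cross; simpl; ring. Qed.

Lemma cross_at_q (p q r : pt) :
  cross (vsub q p) (vsub r p) = cross (vsub r q) (vsub p q).
Proof. destruct p, q, r; unfold vsub, cross; simpl; ring. Qed.

Lemma dot_vsub_via (x y z g : pt) : dot g (vsub x y) = dot g (vsub x z) - dot g (vsub y z).
Proof. destruct x, y, z, g; unfold dot, vsub; simpl; ring. Qed.

Lemma dot_vsub_swap (x y g : pt) : dot g (vsub x y) = - dot g (vsub y x).
Proof. destruct x, y, g; unfold dot, vsub; simpl; ring. Qed.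

Lemma angle_bound (p q r : pt) : 0 <= angle p q r <= PI.
Proof. apply acos_bound. Qed.

Section Triangle.

Variables p q r : pt.
Hypothesis nondeg : nondegenerate p q r.

Local Notation v := (vsub p q).
Local Notation w := (vsub r q).

Lemma cross_q_neq0 : cross w v <> 0.
Proof. rewrite <- cross_at_q; exact nondeg. Qed.

Lemma cross_q_sq_pos : 0 < cross w v * cross w v.
Proof.
  assert (H := cross_q_neq0).
  destruct (Rlt_or_le 0 (cross w v)); [nra|].
  assert (cross w v < 0) by lra. nra.
Qed.

Lemma sides_at_q_pos : 0 < seglen q p /\ 0 < seglen q r.
Proof.
  assert (Hlag := lagrange_identity v w).
  assert (Hpos := cross_q_sq_pos).
  assert (Hp := dot_self_nonneg v).
  assert (Hr := dot_self_nonneg w).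
  assert (H0 : 0 < dot v v * dot w w) by nra.
  unfold seglen, vnorm; split; apply sqrt_lt_R0;
    (destruct (Rle_lt_or_eq _ _ Hp); destruct (Rle_lt_or_eq _ _ Hr); nra).
Qed.

Lemma dist_line_pos : 0 < dist_line p q r.
Proof.
  destruct sides_at_q_pos as [_ Hr].
  apply Rdiv_lt_0_compat; [apply Rabs_pos_lt, cross_q_neq0 | exact Hr].
Qed.

(* Cauchy-Schwarz: the argument of acos in the definition of angle lies in [-1, 1]. *)
Lemma cosine_arg_bound :
  -1 <= dot v w / (seglen q p * seglen q r) <= 1.
Proof.
  destruct (sides_at_q_pos) as [HV HL].
  assert (Hlag := lagrange_identity v w).
  assert (HVV := seglen_sq q p). assert (HLL := seglen_sq q r).
  assert (HVL : 0 < seglen q p * seglen q r) by nra.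
  assert (Hsq : dot v w * dot v w <= (seglen q p * seglen q r) * (seglen q p * seglen q r)).
  { assert (H := cross_q_sq_pos). nra. }
  assert (Hb : - (seglen q p * seglen q r) <= dot v w <= seglen q p * seglen q r) by nra.
  split.
  - apply (Rmult_le_reg_r (seglen q p * seglen q r)); [lra|].
    field_simplify; lra.
  - apply (Rmult_le_reg_r (seglen q p * seglen q r)); [lra|].
    field_simplify; lra.
Qed.

Lemma cos_angle : cos (angle p q r) = dot v w / (seglen q p * seglen q r).
Proof. apply cos_acos, cosine_arg_bound. Qed.

Lemma sin_angle :
  sin (angle p q r) = Rabs (cross w v) / (seglen q p * seglen q r).
Proof.
  destruct (sides_at_q_pos) as [HV HL].
  unfold angle; rewrite sin_acos by apply cosine_arg_bound.
  rewrite <- sqrt_square.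
  - f_equal. unfold Rsqr.
    assert (Hlag := lagrange_identity v w).
    rewrite <- seglen_sq, <- (seglen_sq q r) in Hlag.
    assert (Habs : Rabs (cross w v) * Rabs (cross w v) = cross w v * cross w v).
    { rewrite <- Rabs_mult. apply Rabs_pos_eq. apply Rle_0_sqr. }
    field_simplify; [| split; lra | split; lra].
    f_equal. simpl. nra.
  - apply Rmult_le_pos; [apply Rabs_pos|].
    apply Rlt_le, Rinv_0_lt_compat; nra.
Qed.

Lemma sin_angle_pos : 0 < sin (angle p q r).
Proof.
  destruct (sides_at_q_pos) as [HV HL].
  rewrite sin_angle.
  apply Rdiv_lt_0_compat; [apply Rabs_pos_lt, cross_q_neq0 | nra].
Qed.

Lemma grad_along_qr (ta tb tc : R) : dot (grad p q r ta tb tc) w = tc - tb.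
Proof.
  destruct (grad_spec p q r ta tb tc nondeg) as [Hq Hr].
  rewrite (dot_vsub_via _ _ p), Hq, Hr; ring.
Qed.

Lemma grad_along_qp (ta tb tc : R) : dot (grad p q r ta tb tc) v = ta - tb.
Proof.
  destruct (grad_spec p q r ta tb tc nondeg) as [Hq _].
  rewrite dot_vsub_swap, Hq; ring.
Qed.

Lemma grad_norm_sq (ta tb tc : R) :
  dot (grad p q r ta tb tc) (grad p q r ta tb tc) =
  tangential_slope q r tb tc * tangential_slope q r tb tc +
  normal_slope p q r ta tb tc * normal_slope p q r ta tb tc.
Proof.
  assert (Hgram := gram_identity w v (grad p q r ta tb tc)).
  rewrite grad_along_qr, grad_along_qp in Hgram.
  destruct sides_at_q_pos as [_ HL].
  assert (HD := cross_q_neq0).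
  assert (HLL := seglen_sq q r).
  assert (Habs : Rabs (cross w v) * Rabs (cross w v) = cross w v * cross w v).
  { rewrite <- Rabs_mult. apply Rabs_pos_eq, Rle_0_sqr. }
  assert (Hk : Rabs (cross w v) <> 0) by (apply Rabs_no_R0; exact HD).
  unfold tangential_slope, normal_slope, dist_line.
  rewrite <- HLL in Hgram |- *. rewrite <- Habs in Hgram.
  apply (Rmult_eq_reg_l (seglen q r * seglen q r * (Rabs (cross w v) * Rabs (cross w v)))).
  - rewrite Hgram. field. split; lra.
  - apply Rmult_integral_contrapositive; split; apply Rmult_integral_contrapositive; split; lra.
Qed.

Lemma normal_slope_shift (ta tb tc delta : R) :
  normal_slope p q r (ta + delta) tb tc =
  normal_slope p q r ta tb tc + delta / dist_line p q r.
Proof.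
  assert (Hh := dist_line_pos).
  destruct sides_at_q_pos as [_ HL].
  assert (HLL := seglen_sq q r).
  unfold normal_slope. field. split; nra.
Qed.

(* Projection of the gradient on qp:  y sin theta = (tp - tq)/|qp| - a cos theta. *)
Lemma normal_slope_sin (ta tb tc : R) :
  normal_slope p q r ta tb tc * sin (angle p q r) =
  (ta - tb) / seglen q p - tangential_slope q r tb tc * cos (angle p q r).
Proof.
  destruct sides_at_q_pos as [HV HL].
  assert (Hk : Rabs (cross w v) <> 0) by (apply Rabs_no_R0, cross_q_neq0).
  rewrite sin_angle, cos_angle.
  unfold normal_slope, tangential_slope, dist_line.
  rewrite <- seglen_sq. field. repeat split; lra.
Qed.

Lemma normal_slope_sin_le (ta tb tc : R) :
  ta <= tb ->
  normal_slope p q r ta tb tc * sin (angle p q r) <=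
  - (tangential_slope q r tb tc * cos (angle p q r)).
Proof.
  intro Hab. destruct sides_at_q_pos as [HV _].
  rewrite normal_slope_sin.
  assert (0 <= (tb - ta) / seglen q p) by (apply div_nonneg; lra).
  replace ((ta - tb) / seglen q p) with (- ((tb - ta) / seglen q p)) by (field; lra).
  lra.
Qed.

Lemma shifted_grad_norm_lt (ta tb tc delta sigma : R) :
  0 < sigma ->
  (vnorm (grad p q r (ta + delta) tb tc) < sigma <->
   tangential_slope q r tb tc * tangential_slope q r tb tc +
   (normal_slope p q r ta tb tc + delta / dist_line p q r) *
   (normal_slope p q r ta tb tc + delta / dist_line p q r) < sigma * sigma).
Proof.
  intro Hs. rewrite vnorm_lt_iff, grad_norm_sq, normal_slope_shift by exact Hs.
  reflexivity.
Qed.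

End Triangle.

Lemma scaled_shift_bound (delta h eps sigma : R) :
  0 < h -> 0 <= delta <= eps * h * sigma -> 0 <= delta / h <= eps * sigma.
Proof.
  intros Hh [H0 H1]. split.
  - apply div_nonneg; lra.
  - apply (Rmult_le_reg_r h); [exact Hh|].
    replace (delta / h * h) with delta by (field; lra). lra.
Qed.

Theorem mainTheorem3 (p q r : pt) (tp tq tr sigma eps : R) :
  nondegenerate p q r ->
  tp <= tq -> tq <= tr ->
  0 < sigma ->
  vnorm (grad p q r tp tq tr) < sigma ->
  0 < eps < 1 ->
  (angle p q r <= PI / 2 ->
   (tr - tq) / seglen q r <= (1 - eps) * sigma ->
   forall delta, 0 <= delta <= eps * dist_line p q r * sigma ->
     vnorm (grad p q r (tp + delta) tq tr) < sigma)
  /\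
  (PI / 2 < angle p q r < PI ->
   (tr - tq) / seglen q r <= (1 - eps) * sigma * sin (angle p q r) ->
   forall delta, 0 <= delta <= eps * dist_line p q r * sigma ->
     vnorm (grad p q r (tp + delta) tq tr) < sigma).
Proof.
  intros nondeg Hpq Hqr Hs HG He.
  destruct (sides_at_q_pos p q r nondeg) as [_ HL].
  assert (Hh := dist_line_pos p q r nondeg).
  set (a := tangential_slope q r tq tr).
  set (y := normal_slope p q r tp tq tr).
  assert (Ha : 0 <= a) by (apply div_nonneg; lra).
  assert (H0 : a * a + y * y < sigma * sigma).
  { rewrite vnorm_lt_iff, (grad_norm_sq p q r nondeg) in HG by exact Hs. exact HG. }
  assert (Hsin := sin_angle_pos p q r nondeg).
  assert (Hy := normal_slope_sin_le p q r nondeg tp tq tr Hpq).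
  assert (Hrange := angle_bound p q r).
  split.
  - intros Hangle Hslope delta Hdelta.
    apply (shifted_grad_norm_lt p q r nondeg); [exact Hs|].
    apply (acute_shift a y (sin (angle p q r)) (cos (angle p q r)) sigma eps);
      [exact Hs | exact He | split; [exact Ha | exact Hslope] | exact Hsin
      | apply cos_ge_0; lra | exact Hy | exact H0 | apply scaled_shift_bound; assumption].
  - intros Hangle Hslope delta Hdelta.
    apply (shifted_grad_norm_lt p q r nondeg); [exact Hs|].
    apply (obtuse_shift a y (sin (angle p q r)) (cos (angle p q r)) sigma eps);
      [exact Hs | exact He | split; [exact Ha | exact Hslope] | exact Hsin
      | apply cos_lt_0; lra | rewrite <- (sin2_cos2 (angle p q r)); unfold Rsqr; ring
      | exact Hy | exact H0 | apply scaled_shift_bound; assumption].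
Qed.
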